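(* Let $n\ge4$, $x_1,\dots,x_{n-1}>0$, $\gamma,\delta>0$ with $\gamma\ne1\ne\delta$, $x_0=1$, and let $\mathbf{P}$ be the $n\times n$ matrix with entries $p_{ij}=x_{j-1}/x_{i-1}$ except $p_{12}=\delta x_1$, $p_{21}=1/(\delta x_1)$, $p_{13}=\gamma x_2$, $p_{31}=1/(\gamma x_2)$. Let $\mathbf{w}^{EM}=(w_1^{EM},\dots,w_n^{EM})^T$ be the principal right eigenvector of $\mathbf{P}$. If $\delta>1$ and $\delta\ge\gamma$, then $w_1^{EM}/w_2^{EM}<\delta x_1$.
   Context: The principal right eigenvector is the positive (Perron) eigenvector belonging to the largest eigenvalue; the ratios of its entries do not depend on its scaling. *)

From HB Require Import structures.
From mathcomp Require Import all_boot all_order all_algebra.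
From mathcomp Require Import reals.
Set Implicit Arguments. Unset Strict Implicit. Unset Printing Implicit Defensive.
Import Order.TTheory GRing.Theory Num.Theory.
Local Open Scope ring_scope.

(* Indices are 0-based: row/column i (0-based) corresponds to index i+1 of the
   paper, and x k is the paper's x_k (with x 0 = 1 assumed in the theorem). *)

Definition Pentry (R : realType) (x : nat -> R) (gamma delta : R) (i j : nat) : R :=
  if (i == 0%N) && (j == 1%N) then delta * x 1%N
  else if (i == 1%N) && (j == 0%N) then (delta * x 1%N)^-1
  else if (i == 0%N) && (j == 2%N) then gamma * x 2%N
  else if (i == 2%N) && (j == 0%N) then (gamma * x 2%N)^-1
  else x j / x i.

Definition Pmat (R : realType) (n : nat) (x : nat -> R) (gamma delta : R)
  : 'M[R]_n := \matrix_(i < n, j < n) Pentry x gamma delta i j.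

(* k-th entry (0-based) of a column vector; 0 if out of range. *)
Definition ventry (R : realType) (n : nat) (w : 'cV[R]_n) (k : nat) : R :=
  if insub k is Some i then w i 0 else 0.

Definition principal_right_eigenvector (R : realType) (n : nat)
  (A : 'M[R]_n) (w : 'cV[R]_n) : Prop :=
  exists lam : R,
    [/\ A *m w = lam *: w,
        (forall i, 0 < w i 0) &
        (forall (mu : R) (v : 'cV[R]_n), v != 0 -> A *m v = mu *: v -> mu <= lam)].
Arguments Pmat {R} n x gamma delta.

From HB Require Import structures.
From mathcomp Require Import all_boot all_order all_algebra.
From mathcomp Require Import reals.
From mathcomp Require Import ring.
Set Implicit Arguments. Unset Strict Implicit. Unset Printing Implicit Defensive.
Import Order.TTheory GRing.Theory Num.Theory.
Local Open Scope ring_scope.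

(** Write [v] for the eigenvector, [lam] for its eigenvalue and
    [S = \sum_(k >= 3) x_k v_k].  Rows 1 and 2 of [P v = lam v] read
      [lam v_1 = v_1 + delta x_1 v_2 + gamma x_2 v_3 + S],
      [lam v_2 = v_1 / (delta x_1) + v_2 + x_2 v_3 / x_1 + S / x_1].
    Multiplying the second by [delta x_1] and subtracting the first gives
      [lam (delta x_1 v_2 - v_1) = (delta - gamma) x_2 v_3 + (delta - 1) S],
    which is positive since [S > 0] for [n >= 4].  As [P] is a positive
    matrix, [lam > 0], hence [v_1 / v_2 < delta x_1]. *)

Section PositiveEigenvalue.

Variables (R : realFieldType) (n : nat).

Lemma pos_eigenvalue_gt0 (A : 'M[R]_n) (w : 'cV[R]_n) (lam : R) (i : 'I_n) :
  (forall i j, 0 < A i j) -> (forall i, 0 < w i 0) ->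
  A *m w = lam *: w -> 0 < lam.
Proof.
move=> A_gt0 w_gt0 /(congr1 (fun M : 'cV_n => M i 0)); rewrite !mxE => ev_i.
have : 0 < lam * w i 0.
  rewrite -ev_i (bigD1 i) //= ltr_wpDr ?mulr_gt0 //.
  by rewrite sumr_ge0 // => j _; rewrite mulr_ge0 ?ltW.
by rewrite pmulr_lgt0.
Qed.

End PositiveEigenvalue.

Section PerturbedMatrix.

Variables (R : realType) (n : nat) (x : nat -> R) (gamma delta : R).

Lemma ventry_ord (w : 'cV[R]_n) (j : 'I_n) : ventry w j = w j 0.
Proof. by rewrite /ventry valK. Qed.

Lemma ventry_gt0 (w : 'cV[R]_n) (k : nat) :
  (forall i, 0 < w i 0) -> (k < n)%N -> 0 < ventry w k.
Proof. by move=> w_gt0 lt_kn; rewrite -[k]/(val (Ordinal lt_kn)) ventry_ord. Qed.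

Lemma Pentry_ge3 (i j : nat) : (3 <= j)%N -> Pentry x gamma delta i j = x j / x i.
Proof. by case: j => [|[|[|j]]] //; rewrite /Pentry !andbF. Qed.

Lemma Pentry_gt0 (i j : nat) :
  (forall k, (k < n)%N -> 0 < x k) -> 0 < gamma -> 0 < delta ->
  (i < n)%N -> (j < n)%N -> 0 < Pentry x gamma delta i j.
Proof.
move=> x_gt0 gamma_gt0 delta_gt0 lt_in lt_jn; rewrite /Pentry.
repeat case: ifP => [/andP[/eqP ei /eqP ej]|_]; subst;
  by rewrite ?invr_gt0 ?mulr_gt0 ?invr_gt0 ?x_gt0.
Qed.

Lemma Pmat_eigen_row (w : 'cV[R]_n) (lam : R) (i : nat) :
  Pmat n x gamma delta *m w = lam *: w -> (i < n)%N ->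
  lam * ventry w i = \sum_(0 <= k < n) Pentry x gamma delta i k * ventry w k.
Proof.
move=> ev lt_in; pose i' := Ordinal lt_in.
have := congr1 (fun M : 'cV[R]_n => M i' 0) ev.
rewrite !mxE (ventry_ord w i') => <-.
by rewrite big_mkord; apply: eq_bigr => j _; rewrite mxE ventry_ord.
Qed.

Lemma Pmat_eigen_row_split (w : 'cV[R]_n) (lam : R) (i : nat) :
  Pmat n x gamma delta *m w = lam *: w -> (i < n)%N -> (3 <= n)%N ->
  lam * ventry w i =
    Pentry x gamma delta i 0 * ventry w 0 + Pentry x gamma delta i 1 * ventry w 1
    + Pentry x gamma delta i 2 * ventry w 2
    + (x i)^-1 * \sum_(3 <= k < n) x k * ventry w k.
Proof.
move=> ev lt_in le3n; rewrite Pmat_eigen_row // mulr_sumr.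
rewrite (@big_cat_nat _ _ _ 3) // /= !big_nat_recl // big_nil addr0.
rewrite !addrA; congr (_ + _); apply: eq_big_nat => k /andP[le3k _].
by rewrite Pentry_ge3 // mulrCA mulrA.
Qed.

End PerturbedMatrix.

Lemma perturbed_ratio_lt (R : realFieldType) (x1 x2 gamma delta lam v0 v1 v2 S : R) :
  0 < x1 -> 0 < x2 -> 0 < v2 -> 0 < S -> 0 < lam ->
  1 < delta -> gamma <= delta ->
  lam * v0 = v0 + delta * x1 * v1 + gamma * x2 * v2 + S ->
  lam * v1 = (delta * x1)^-1 * v0 + v1 + x2 / x1 * v2 + x1^-1 * S ->
  v0 < delta * x1 * v1.
Proof.
move=> x1_gt0 x2_gt0 v2_gt0 S_gt0 lam_gt0 delta_gt1 le_gamma_delta row0 row1.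
have identity : lam * (delta * x1 * v1 - v0) =
    (delta - gamma) * x2 * v2 + (delta - 1) * S.
  have x1_neq0 : x1 != 0 by rewrite gt_eqF.
  have delta_neq0 : delta != 0 by rewrite gt_eqF // (lt_trans ltr01).
  rewrite mulrBr row0 mulrCA row1; field.
  by rewrite delta_neq0 x1_neq0.
have : 0 < lam * (delta * x1 * v1 - v0).
  rewrite identity; apply: ltr_wpDl.
  - by rewrite !mulr_ge0 ?subr_ge0 // ltW.
  - by rewrite mulr_gt0 ?subr_gt0.
by rewrite pmulr_rgt0 // subr_gt0.
Qed.

Theorem mainTheorem5 (R : realType) (n : nat) (x : nat -> R) (gamma delta : R)
  (w : 'cV[R]_n) :
  (4 <= n)%N ->
  x 0%N = 1 ->
  (forall k, (1 <= k < n)%N -> 0 < x k) ->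
  0 < gamma -> 0 < delta -> gamma != 1 -> delta != 1 ->
  principal_right_eigenvector (Pmat n x gamma delta) w ->
  1 < delta -> gamma <= delta ->
  ventry w 0 / ventry w 1 < delta * x 1%N.
Proof.
move=> le4n x0 x_pos gamma_gt0 delta_gt0 _ _ [lam [ev w_gt0 _]] delta_gt1 le_gd.
have x_gt0 k : (k < n)%N -> 0 < x k.
  by case: k => [|k] lt_kn; rewrite ?x0 ?x_pos ?lt_kn.
have v_gt0 k : (k < n)%N -> 0 < ventry w k by exact: ventry_gt0.
have lam_gt0 : 0 < lam.
  apply: (pos_eigenvalue_gt0 (Ordinal (leq_trans (isT : (0 < 4)%N) le4n)) _ w_gt0 ev).
  by move=> i j; rewrite mxE (Pentry_gt0 x_gt0).
have S_gt0 : 0 < \sum_(3 <= k < n) x k * ventry w k.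
  have := @ltr_sum_nat _ 3 n (fun=> 0) (fun k => x k * ventry w k) le4n.
  rewrite big1_eq; apply=> k /andP[_ lt_kn].
  by rewrite mulr_gt0 ?x_gt0 ?v_gt0.
have le3n : (3 <= n)%N := ltnW le4n.
have row0 := Pmat_eigen_row_split ev (leq_trans (isT : (0 < 3)%N) le3n) le3n.
have row1 := Pmat_eigen_row_split ev (leq_trans (isT : (1 < 3)%N) le3n) le3n.
have x1_gt0 : 0 < x 1%N by rewrite x_gt0 // (leq_trans _ le3n).
rewrite /Pentry /= x0 divr1 invr1 !mul1r in row0.
rewrite /Pentry /= divff ?gt_eqF // mul1r in row1.
rewrite ltr_pdivrMr ?v_gt0 ?(leq_trans _ le3n) //.
by apply: perturbed_ratio_lt row0 row1; rewrite ?x_gt0 ?v_gt0 ?(leq_trans _ le3n).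
Qed.
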